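(* Let $\mathbb{G}$ be a unicellular fatgraph and let $C_1\neq C_2$ be two of its components. Then the traces $I_{C_1}$ and $I_{C_2}$ are either subsequent (every sector of one trace is $\le_\gamma$ every sector of the other) or nested (one trace is contained in a gap of the other component).
   Context: A (rooted) unicellular fatgraph with $n$ ribbons: sectors $[2n+1]$, vertices the cycles of a permutation $\sigma$, boundary $\gamma=(1,2,\dots,2n+1)$ (a single cycle), orientations $\omega$ of sectors; the pairs $(x,\sigma(x))$, $x\neq 2n+1$, are matched into ribbons $((x,\sigma(x)),(y,\sigma(y)))$, each ribbon thus having four sectors. $<_\gamma$ denotes the order $1<2<\dots<2n+1$ and $[s,t]_\gamma=\{u: s\le_\gamma u\le_\gamma t\}$. For a ribbon $r$, $r^L$ and $r^R$ are the $<_\gamma$-min and max of its sectors. Ribbons $r_1,r_2$ cross if $r_1^L<_\gamma r_2^L<_\gamma r_1^R<_\gamma r_2^R$ or $r_2^L<_\gamma r_1^L<_\gamma r_2^R<_\gamma r_1^R$. A component is an equivalence class of the equivalence relation on ribbons generated by crossing. The trace $I_C$ of a component $C$ is the set of sectors of its ribbons; write it as a disjoint union of maximal $\gamma$-intervals $[a_1,c_1]_\gamma\cup\dots\cup[a_l,c_l]_\gamma$ with $a_1<_\gamma\dots<_\gamma a_l$; the intervals $[c_i,a_{i+1}]_\gamma$, $1\le i<l$, are the gaps of $C$. *)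

(* Sectors [2n+1] are encoded as the ordinals 'I_(2n+1) = {0,...,2n}
   (sector k of the paper is the ordinal k-1); the boundary
   gamma = (1,2,...,2n+1) becomes i |-> i+1, and <_gamma is the order
   of nat on the values.  The last sector (paper: 2n+1) is [root n]. *)
From mathcomp Require Import all_boot all_fingroup.
Set Implicit Arguments.
Unset Strict Implicit.
Unset Printing Implicit Defensive.

Notation sector n := 'I_(n.*2.+1).

Definition root (n : nat) : sector n := ord_max.

Definition gsucc (n : nat) (s : sector n) : sector n := inord s.+1.

(* a half-edge is a pair (x, sigma x) with x <> 2n+1; we identify it with x.
   [mate] matches the 2n half-edges into n ribbons (a fixed-point-free
   involution on the non-root sectors). *)
Definition is_matching (n : nat) (mate : sector n -> sector n) : Prop :=
  forall x : sector n, x != root n ->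
    [/\ mate x != root n, mate x != x & mate (mate x) = x].

Definition ribbons (n : nat) (mate : sector n -> sector n) : {set {set (sector n)}} :=
  [set [set x; mate x] | x in [set x : sector n | x != root n]].

Definition rsectors (n : nat) (sigma : {perm (sector n)}) (r : {set (sector n)})
  : {set (sector n)} := \bigcup_(x in r) [set x; sigma x].

(* the two sides of the ribbon with half-edges x and y = mate x; the boolean
   [tw] (determined by the orientations omega) selects how the two ends of the
   ribbon are glued: sides {x, sigma y}, {sigma x, y}  or  {x, y}, {sigma x, sigma y}. *)
Definition side1 (n : nat) (sigma : {perm (sector n)}) (mate : sector n -> sector n)
  (tw : {set (sector n)} -> bool) (x : sector n) : {set (sector n)} :=
  if tw [set x; mate x] then [set x; mate x] else [set x; sigma (mate x)].
Definition side2 (n : nat) (sigma : {perm (sector n)}) (mate : sector n -> sector n)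
  (tw : {set (sector n)} -> bool) (x : sector n) : {set (sector n)} :=
  if tw [set x; mate x] then [set sigma x; sigma (mate x)] else [set sigma x; mate x].

Definition gstep (n : nat) (s : sector n) : {set (sector n)} := [set s; gsucc s].

Definition is_gstep (n : nat) (p : {set (sector n)}) : Prop :=
  exists2 s : sector n, s != root n & p = gstep s.

(* the boundary of the fatgraph is the single cycle gamma = (1 ... 2n+1):
   every ribbon side is a boundary step s -> s+1, and every boundary step
   s -> s+1 (s <> 2n+1) runs along a side of some ribbon; the step
   2n+1 -> 1 passes the root. *)
Definition boundary_is_gamma (n : nat) (sigma : {perm (sector n)})
  (mate : sector n -> sector n) (tw : {set (sector n)} -> bool) : Prop :=
  (forall x : sector n, x != root n ->
      is_gstep (side1 sigma mate tw x) /\ is_gstep (side2 sigma mate tw x)) /\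
  (forall s : sector n, s != root n ->
      exists2 x : sector n, x != root n &
        gstep s = side1 sigma mate tw x \/ gstep s = side2 sigma mate tw x).

Definition unicellular_fatgraph (n : nat) (sigma : {perm (sector n)})
  (mate : sector n -> sector n) (tw : {set (sector n)} -> bool) : Prop :=
  is_matching mate /\ boundary_is_gamma sigma mate tw.

Definition rL (n : nat) (sigma : {perm (sector n)}) (r : {set (sector n)}) : nat :=
  \big[minn/n.*2]_(s in rsectors sigma r) (val s).
Definition rR (n : nat) (sigma : {perm (sector n)}) (r : {set (sector n)}) : nat :=
  \max_(s in rsectors sigma r) (val s).

Definition cross (n : nat) (sigma : {perm (sector n)}) (r1 r2 : {set (sector n)}) : bool :=
  [&& rL sigma r1 < rL sigma r2, rL sigma r2 < rR sigma r1 & rR sigma r1 < rR sigma r2]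
  || [&& rL sigma r2 < rL sigma r1, rL sigma r1 < rR sigma r2 & rR sigma r2 < rR sigma r1].

Definition crossrel (n : nat) (sigma : {perm (sector n)}) (mate : sector n -> sector n)
  : rel {set (sector n)} :=
  fun r1 r2 => [&& r1 \in ribbons mate, r2 \in ribbons mate & cross sigma r1 r2].

(* components: equivalence classes of the equivalence relation on ribbons
   generated by crossing (connect = reflexive-transitive closure of the
   symmetric relation crossrel) *)
Definition is_component (n : nat) (sigma : {perm (sector n)}) (mate : sector n -> sector n)
  (C : {set {set (sector n)}}) : Prop :=
  exists2 r, r \in ribbons mate &
    C = [set r' in ribbons mate | connect (crossrel sigma mate) r r'].

Definition trace (n : nat) (sigma : {perm (sector n)}) (C : {set {set (sector n)}})
  : {set (sector n)} := \bigcup_(r in C) rsectors sigma r.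

Definition ginterval (n : nat) (s t : nat) : {set (sector n)} :=
  [set u : sector n | s <= u <= t].

Definition max_interval (n : nat) (I : {set (sector n)}) (a c : nat) : Prop :=
  [/\ a <= c, ginterval n a c \subset I,
      (forall u : sector n, u.+1 = a -> u \notin I)
    & (forall u : sector n, val u = c.+1 -> u \notin I)].

(* [c,a']_gamma is a gap of C: c is the end of a maximal interval [a,c] of I_C,
   a' is the start of the next maximal interval [a',c'] (w.r.t. the order of
   the starting points) *)
Definition is_gap (n : nat) (sigma : {perm (sector n)}) (C : {set {set (sector n)}})
  (c a' : nat) : Prop :=
  exists a c',
    [/\ max_interval (trace sigma C) a c, max_interval (trace sigma C) a' c', a < a'
      & forall b d, max_interval (trace sigma C) b d -> ~ (a < b /\ b < a')].

From Pilot Require Import Defs.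
From mathcomp Require Import all_boot all_fingroup.
From mathcomp Require Import zify.
(* Re-imported so that [root] denotes the root sector, not fingraph's [root]. *)
Import Defs.
Set Implicit Arguments.
Unset Strict Implicit.
Unset Printing Implicit Defensive.

(* Each ribbon has two sides, both boundary steps s -> s+1; attributing one
   side to each of its two half-edges maps the 2n half-edges onto the 2n
   boundary steps, hence bijectively.  So a ribbon occupies two distinct steps
   {a, a+1} and {b, b+1}, distinct ribbons occupy disjoint steps: a ribbon is
   the interval [min(a,b), max(a,b)+1] with its sectors next to its ends, and
   distinct ribbons have distinct ends.
   Let x be a ribbon crossing no ribbon of a component C and sharing no end
   with one.  Crossing ribbons of C are then both inside x or both not, and,
   when neither contains x, both to its left or both not; so these properties
   are constant on C.  If C1 starts before C2, no ribbon of C1 is inside a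
   ribbon of C2, and therefore each sector of I_{C1} lies left of the span
   [a, b] of C2 or right of it.  Either all of them lie left (subsequent
   traces), or the last sector of I_{C1} before a and the first one after b
   bound a gap of C1, which contains I_{C2}. *)

Lemma geq_bigmin_cond (I : finType) (P : pred I) k (F : I -> nat) i :
  P i -> \big[minn/k]_(j | P j) F j <= F i.
Proof.
move=> Pi; elim: (index_enum I) (mem_index_enum i) => // j r IH.
rewrite inE big_cons => /orP [/eqP<- | /IH le_min]; first by rewrite Pi geq_minl.
by case: (P j); rewrite // geq_min le_min orbT.
Qed.

Lemma connect_const (T : finType) (e : rel T) (aT : Type) (f : T -> aT) x :
  (forall y z, connect e x y -> e y z -> f y = f z) ->
  forall y, connect e x y -> f y = f x.
Proof.
move=> f_e _ /connectP [p + ->]; elim/last_ind: p => //= p z IH.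
rewrite rcons_path last_rcons => /andP [e_p e_z].
have x_p : connect e x (last x p) by apply/connectP; exists p.
by rewrite -(f_e _ _ x_p e_z) IH.
Qed.

Lemma mem_ginterval n (s t k : nat) :
  k <= n.*2 -> ((inord k : sector n) \in ginterval n s t) = (s <= k <= t).
Proof. by move=> k_le; rewrite inE inordK. Qed.

Lemma max_interval_around n (I : {set sector n}) (u : sector n) :
  u \in I -> exists a c, a <= u <= c /\ max_interval I a c.
Proof.
move=> uI.
have I_u : ginterval n u u \subset I.
  by apply/subsetP => w; rewrite inE -eqn_leq => /eqP/val_inj <-.
pose Pa b := ginterval n b u \subset I.
pose Pc d := (d <= n.*2) && (ginterval n u d \subset I).
have Pc_u : Pc u by rewrite /Pc I_u -ltnS ltn_ord.
have [a Pa_a a_min] := ex_minnP (ex_intro Pa (val u) I_u).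
have Pc_bound d : Pc d -> d <= n.*2 by case/andP.
have [c /andP [_ Pc_c] c_max] := ex_maxnP (ex_intro Pc (val u) Pc_u) Pc_bound.
have a_u : a <= u := a_min _ I_u.
have u_c : u <= c := c_max _ Pc_u.
exists a, c; split; first by rewrite a_u u_c.
split; first exact: leq_trans a_u u_c.
- apply/subsetP => w; rewrite inE => /andP [a_w w_c].
  case: (leqP w u) => [w_u | u_w].
    by apply: (subsetP Pa_a); rewrite inE a_w w_u.
  by apply: (subsetP Pc_c); rewrite inE (ltnW u_w) w_c.
- move=> v v_a; apply/negP => vI.
  suff /a_min : Pa v by rewrite -v_a ltnn.
  apply/subsetP => w; rewrite inE leq_eqVlt => /andP [/orP [/eqP/val_inj <- // | v_w] w_u].
  by apply: (subsetP Pa_a); rewrite inE -v_a v_w w_u.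
- move=> v v_c; apply/negP => vI.
  suff /c_max : Pc v by rewrite v_c ltnn.
  rewrite /Pc -ltnS ltn_ord; apply/subsetP => w.
  rewrite inE [w <= v]leq_eqVlt => /andP [u_w /orP [/eqP/val_inj -> // | w_v]].
  by apply: (subsetP Pc_c); rewrite inE u_w -ltnS -v_c w_v.
Qed.

Lemma is_gap_between n (sigma : {perm (sector n)}) (C : {set {set sector n}})
    (x y : nat) (c0 a0 : sector n) :
  let I := trace sigma C in
  x.+1 < y -> c0 \in I -> c0 <= x -> a0 \in I -> y <= a0 ->
  (forall u : sector n, u \in I -> (u <= x) || (y <= u)) ->
  exists c a, [/\ c <= x, y <= a & is_gap sigma C c a].
Proof.
move=> I x_y c0I c0_x a0I y_a0 off_xy.
have [c /andP [cI c_x] c_max] :=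
  @arg_maxnP _ c0 [pred u | (u \in I) && (u <= x)] val (introT andP (conj c0I c0_x)).
have [a /andP [aI y_a] a_min] :=
  @arg_minnP _ a0 [pred u | (u \in I) && (y <= u)] val (introT andP (conj a0I y_a0)).
have a_le : a <= n.*2 by rewrite -ltnS ltn_ord.
have off_ca (u : sector n) : u \in I -> (u <= c) || (a <= u).
  move=> uI; case/orP: (off_xy u uI) => [u_x | y_u].
    by apply/orP; left; apply: c_max; rewrite /= uI u_x.
  by apply/orP; right; apply: a_min; rewrite /= uI y_u.
have c_a : c.+1 < a by lia.
have off_ca_in k s t : ginterval n s t \subset I -> k <= n.*2 -> s <= k <= t ->
    (k <= c) || (a <= k).
  move=> sub k_le k_st; have := off_ca (inord k); rewrite inordK //.
  by apply; apply: (subsetP sub); rewrite mem_ginterval.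
have [b [d [/andP [b_c c_d] max_bd]]] := max_interval_around cI.
have [_ sub_bd _ _] := max_bd.
have d_c : d = c.
  apply/eqP; rewrite eqn_leq c_d andbT leqNgt; apply/negP => c_lt_d.
  by have := off_ca_in c.+1 _ _ sub_bd; lia.
have [a' [c' [/andP [a'_a a_c'] max_ac']]] := max_interval_around aI.
have [_ sub_ac' _ _] := max_ac'.
have a'_eq : a' = a.
  apply/eqP; rewrite eqn_leq a'_a /= leqNgt; apply/negP => a'_lt_a.
  by have := off_ca_in a.-1 _ _ sub_ac'; lia.
subst d a'.
exists c, a; split => //; exists b, c'; split => //; first by lia.
move=> b' d' [b'_d' sub' left_b' _] [b_b' b'_a].
have b'_c : b' <= c by have := off_ca_in b' _ _ sub'; lia.
have b'1I : (inord b'.-1 : sector n) \in I.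
  by apply: (subsetP sub_bd); rewrite mem_ginterval; lia.
have b'1_succ : (inord b'.-1 : sector n).+1 = b' by rewrite inordK; lia.
by rewrite (negPf (left_b' _ b'1_succ)) in b'1I.
Qed.

Definition half_edges n : {set sector n} := [set x | x != root n].

Lemma half_edgesE n (x : sector n) : (x \in half_edges n) = (x < n.*2).
Proof. by rewrite inE -(inj_eq val_inj) /= ltn_neqAle -ltnS ltn_ord andbT. Qed.

Lemma val_gsucc n (s : sector n) : s \in half_edges n -> gsucc s = s.+1 :> nat.
Proof. by rewrite half_edgesE => s_lt; rewrite inordK. Qed.

Lemma mem_gstep n (s u : sector n) : s \in half_edges n ->
  (u \in gstep s) = (u == s :> nat) || (u == s.+1 :> nat).
Proof. by move=> sH; rewrite !inE -val_gsucc. Qed.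

Lemma gstep_inj n : {in half_edges n &, injective (@gstep n)}.
Proof.
move=> s t sH tH st; apply: val_inj => /=.
have s_t : s \in gstep t by rewrite -st !inE eqxx.
have t_s : t \in gstep s by rewrite st !inE eqxx.
by rewrite mem_gstep // in s_t; rewrite mem_gstep // in t_s; lia.
Qed.

Lemma rL_eq n (sigma : {perm (sector n)}) r (m : nat) :
  (exists2 s, s \in rsectors sigma r & s = m :> nat) ->
  (forall s, s \in rsectors sigma r -> m <= s) -> rL sigma r = m.
Proof.
case=> s0 s0r <- m_le; apply/eqP; rewrite eqn_leq geq_bigmin_cond //=.
apply: (big_ind (leq s0)) => [|y z|s /m_le] //; first by rewrite -ltnS ltn_ord.
by rewrite leq_min => -> ->.
Qed.

Lemma rR_eq n (sigma : {perm (sector n)}) r (m : nat) :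
  (exists2 s, s \in rsectors sigma r & s = m :> nat) ->
  (forall s, s \in rsectors sigma r -> s <= m) -> rR sigma r = m.
Proof.
case=> s0 s0r <- le_m; apply/eqP; rewrite eqn_leq (leq_bigmax_cond _ s0r) andbT.
exact/bigmax_leqP.
Qed.

Section Unicellular.
Variables (n : nat) (sigma : {perm (sector n)}) (mate : sector n -> sector n).
Variables (tw : {set sector n} -> bool).
Hypothesis fatgraph : unicellular_fatgraph sigma mate tw.

Local Notation side1 := (side1 sigma mate tw).
Local Notation side2 := (side2 sigma mate tw).

Lemma mate_half_edge x : x \in half_edges n ->
  [/\ mate x \in half_edges n, mate x != x & mate (mate x) = x].
Proof. by rewrite !inE; case: fatgraph => matching _ /matching. Qed.

(* Both half-edges of a twisted ribbon have the same [side1], so the smaller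
   one takes [side1] and the larger one [side2]. *)
Definition own_side (x : sector n) : {set sector n} :=
  if tw [set x; mate x] && (mate x < x) then side2 x else side1 x.

Lemma own_sides x : x \in half_edges n ->
  (side1 x = own_side x /\ side2 x = own_side (mate x)) \/
  (side1 x = own_side (mate x) /\ side2 x = own_side x).
Proof.
case/mate_half_edge => _ mate_neq mateK; rewrite /own_side /side1 /side2 mateK.
rewrite [[set mate x; x]]setUC; case: (tw [set x; mate x]) => /=; last first.
  by left; rewrite [[set sigma x; _]]setUC.
have [x_lt | mate_le] := ltnP x (mate x).
  by left; rewrite ltnNge (ltnW x_lt) [[set sigma (mate x); _]]setUC.
by right; rewrite ltn_neqAle mate_le andbT mate_neq.
Qed.

Lemma own_side_gstep x :
  x \in half_edges n -> exists2 s, s \in half_edges n & own_side x = gstep s.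
Proof.
rewrite inE /own_side => /(fatgraph.2.1 x) [[s1 s1H ->] [s2 s2H ->]].
by case: ifP => _; [exists s2 | exists s1]; rewrite ?inE.
Qed.

(* Counting: the 2n half-edges reach all 2n boundary steps. *)
Lemma own_side_inj : {in half_edges n &, injective own_side}.
Proof.
apply/imset_injP; rewrite eqn_leq leq_imset_card /= -(card_in_imset (@gstep_inj n)).
apply/subset_leq_card/subsetP => _ /imsetP [s + ->].
rewrite inE => /(fatgraph.2.2 s) [x x_root steps].
have xH : x \in half_edges n by rewrite inE.
have [mH _ _] := mate_half_edge xH.
by case: (own_sides xH) => -[e1 e2]; case: steps => ->; rewrite ?e1 ?e2; exact: imset_f.
Qed.

Definition side_start (x : sector n) : sector n :=
  odflt (root n) [pick s in half_edges n | own_side x == gstep s].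

Local Notation start x := (nat_of_ord (side_start x)).

Lemma side_startP x : x \in half_edges n ->
  side_start x \in half_edges n /\ own_side x = gstep (side_start x).
Proof.
move=> xH; rewrite /side_start; case: pickP => [s /andP [sH /eqP] // | none].
by have [s sH e] := own_side_gstep xH; have := none s; rewrite sH e eqxx.
Qed.

Lemma side_start_inj : {in half_edges n &, injective side_start}.
Proof.
move=> x y xH yH e; apply: own_side_inj => //.
by rewrite (side_startP xH).2 (side_startP yH).2 e.
Qed.

Lemma rsectors_ribbon x : x \in half_edges n ->
  rsectors sigma [set x; mate x] = gstep (side_start x) :|: gstep (side_start (mate x)).
Proof.
move=> xH; have [mH _ _] := mate_half_edge xH.
rewrite -(side_startP xH).2 -(side_startP mH).2.
have -> : rsectors sigma [set x; mate x] = side1 x :|: side2 x.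
  rewrite /rsectors bigcup_setU !big_set1 /side1 /side2.
  case: (tw _); apply/setP => u; rewrite !inE;
  by case: (u == x); case: (u == sigma x); case: (u == mate x); case: (_ == _).
by case: (own_sides xH) => [[-> ->] | [-> ->]]; rewrite // setUC.
Qed.

Lemma mem_rsectors_ribbon x u : x \in half_edges n ->
  (u \in rsectors sigma [set x; mate x]) =
  [|| u == start x :> nat, u == (start x).+1 :> nat,
      u == start (mate x) :> nat | u == (start (mate x)).+1 :> nat].
Proof.
move=> xH; have [mH _ _] := mate_half_edge xH.
by rewrite rsectors_ribbon // in_setU !mem_gstep ?(side_startP _).1 // -!orbA.
Qed.

Lemma start_lt x : x \in half_edges n -> start x < n.*2.
Proof. by move/side_startP => [+ _]; rewrite half_edgesE. Qed.

Lemma start_neq x y :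
  x \in half_edges n -> y \in half_edges n -> x != y -> start x != start y.
Proof. by move=> xH yH; rewrite val_eqE (inj_in_eq side_start_inj). Qed.

Lemma start_mate_neq x : x \in half_edges n -> start x != start (mate x).
Proof.
by move=> xH; have [mH mate_neq _] := mate_half_edge xH; rewrite start_neq // eq_sym.
Qed.

Lemma ribbon_ends x : x \in half_edges n ->
  rL sigma [set x; mate x] = minn (start x) (start (mate x)) /\
  rR sigma [set x; mate x] = (maxn (start x) (start (mate x))).+1.
Proof.
move=> xH; have [mH _ _] := mate_half_edge xH.
have neq := start_mate_neq xH; have lt_x := start_lt xH; have lt_m := start_lt mH.
have mem := mem_rsectors_ribbon _ xH.
split; [apply: rL_eq | apply: rR_eq] => [|s||s]; rewrite ?mem; try lia.
  by exists (inord (minn (start x) (start (mate x)))); rewrite ?mem inordK; lia.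
by exists (inord (maxn (start x) (start (mate x))).+1); rewrite ?mem inordK; lia.
Qed.

Lemma ribbon_shape r : r \in ribbons mate ->
  [/\ rL sigma r + 2 <= rR sigma r,
      exists2 u, u \in rsectors sigma r & u = rL sigma r :> nat
    & forall u, u \in rsectors sigma r ->
        (rL sigma r <= u <= (rL sigma r).+1) || ((rR sigma r).-1 <= u <= rR sigma r)].
Proof.
case/imsetP => x xH ->; have [mH _ _] := mate_half_edge xH.
have neq := start_mate_neq xH; have lt_x := start_lt xH; have lt_m := start_lt mH.
have mem := mem_rsectors_ribbon _ xH.
have [-> ->] := ribbon_ends xH; split; first by lia.
  by exists (inord (minn (start x) (start (mate x)))); rewrite ?mem inordK; lia.
by move=> u; rewrite mem; lia.
Qed.

Lemma ribbon_ends_inj :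
  {in ribbons mate &, forall r r', r != r' ->
     (rL sigma r != rL sigma r') && (rR sigma r != rR sigma r')}.
Proof.
move=> _ _ /imsetP [x xH ->] /imsetP [y yH ->] xy.
have [[mxH _ mxK] [myH _ myK]] := (mate_half_edge xH, mate_half_edge yH).
have [-> ->] := ribbon_ends xH; have [-> ->] := ribbon_ends yH.
have := start_mate_neq xH; have := start_mate_neq yH.
have x_y : x != y by apply: contraNneq xy => ->.
have x_my : x != mate y by apply: contraNneq xy => ->; rewrite myK setUC.
have mx_y : mate x != y by apply: contraNneq xy => <-; rewrite mxK setUC.
have mx_my : mate x != mate y by apply: contraNneq x_y => e; rewrite -mxK e myK.
have := start_neq xH yH x_y; have := start_neq xH myH x_my.
have := start_neq mxH yH mx_y; have := start_neq mxH myH mx_my.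
lia.
Qed.

End Unicellular.

Section Components.
Variables (n : nat) (sigma : {perm (sector n)}) (mate : sector n -> sector n).

Local Notation L := (rL sigma).
Local Notation R := (rR sigma).

Definition separated (x y : {set sector n}) : bool :=
  [&& L x < R x, L y < R y, L x != L y, R x != R y & ~~ cross sigma x y].

Definition inside (x y : {set sector n}) : bool := (L y < L x) && (R x < R y).

Lemma separated_sym x y : separated x y = separated y x.
Proof. by rewrite /separated /cross; apply/idP/idP; lia. Qed.

Lemma inside_cross x y y' : separated x y -> separated x y' ->
  cross sigma y y' -> inside y x = inside y' x.
Proof. by rewrite /separated /inside /cross => *; apply/idP/idP; lia. Qed.

Lemma left_of_cross x y y' : separated x y -> separated x y' ->
  cross sigma y y' -> ~~ inside x y -> ~~ inside x y' -> (R y <= L x) = (R y' <= L x).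
Proof. by rewrite /separated /inside /cross => *; apply/idP/idP; lia. Qed.

Lemma crossrel_sym : symmetric (crossrel sigma mate).
Proof. by move=> x y; rewrite /crossrel /cross andbCA [_ || _]orbC. Qed.

Lemma component_ribbon C r : is_component sigma mate C -> r \in C -> r \in ribbons mate.
Proof. by case=> r0 _ ->; rewrite inE => /andP []. Qed.

Lemma component_of C r : is_component sigma mate C -> r \in C ->
  C = [set r' in ribbons mate | connect (crossrel sigma mate) r r'].
Proof.
case=> r0 _ -> /[dup] rC; rewrite inE => /andP [_ r0r]; apply/setP => r'.
by rewrite !inE (same_connect (sym_connect_sym crossrel_sym) r0r).
Qed.

Lemma component_const C (aT : Type) (f : {set sector n} -> aT) :
  is_component sigma mate C ->
  {in C &, forall x y, cross sigma x y -> f x = f y} -> {in C &, forall x y, f x = f y}.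
Proof.
case=> r0 _ -> f_cross.
suff f_r0 y : connect (crossrel sigma mate) r0 y -> f y = f r0.
  by move=> x y; rewrite !inE => /andP [_ /f_r0 ->] /andP [_ /f_r0 ->].
apply: connect_const => x z r0x /[dup] xz_rel /and3P [xR zR xz].
apply: f_cross xz; rewrite inE ?xR ?zR ?r0x //=.
exact: connect_trans r0x (connect1 xz_rel).
Qed.

Lemma distinct_components_uncrossed C1 C2 q p :
  is_component sigma mate C1 -> is_component sigma mate C2 -> C1 != C2 ->
  q \in C1 -> p \in C2 -> (q != p) && ~~ cross sigma q p.
Proof.
move=> HC1 HC2 C12 qC1 pC2; rewrite -negb_or; apply: contra C12 => q_p.
have [qR pR] := (component_ribbon HC1 qC1, component_ribbon HC2 pC2).
have pC1 : p \in C1.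
  rewrite (component_of HC1 qC1) inE pR.
  case/orP: q_p => [/eqP <- | qp]; first exact: connect0.
  by apply: connect1; rewrite /crossrel qR pR.
by rewrite (component_of HC1 pC1) -(component_of HC2 pC2).
Qed.

Lemma component_extremes C : is_component sigma mate C ->
  exists p0 p1, [/\ p0 \in C, p1 \in C,
    {in C, forall p, L p0 <= L p} & {in C, forall p, R p <= R p1}].
Proof.
case=> r rR defC; have rC : r \in C by rewrite defC inE rR connect0.
have [p0 p0C p0_min] := @arg_minnP _ r (mem C) L rC.
have [p1 p1C p1_max] := @arg_maxnP _ r (mem C) R rC.
by exists p0, p1; split.
Qed.

Hypothesis shape : forall r, r \in ribbons mate ->
  [/\ L r + 2 <= R r,
      exists2 u, u \in rsectors sigma r & u = L r :> nat
    & forall u, u \in rsectors sigma r ->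
        (L r <= u <= (L r).+1) || ((R r).-1 <= u <= R r)].
Hypothesis ends_inj :
  {in ribbons mate &, forall r r', r != r' -> (L r != L r') && (R r != R r')}.

Lemma rsectors_bounds r u : r \in ribbons mate -> u \in rsectors sigma r -> L r <= u <= R r.
Proof. by case/shape => [lt _ near] /near; lia. Qed.

Lemma distinct_components_separated C1 C2 q p :
  is_component sigma mate C1 -> is_component sigma mate C2 -> C1 != C2 ->
  q \in C1 -> p \in C2 -> separated q p.
Proof.
move=> HC1 HC2 C12 qC1 pC2.
have [qR pR] := (component_ribbon HC1 qC1, component_ribbon HC2 pC2).
have /andP [q_p no_cross] := distinct_components_uncrossed HC1 HC2 C12 qC1 pC2.
have [[q_lt _ _] [p_lt _ _]] := (shape qR, shape pR).
have /andP [neqL neqR] := ends_inj qR pR q_p.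
by rewrite /separated neqL neqR no_cross !andbT; apply/andP; split; lia.
Qed.

Section Nesting.
Variables (C1 C2 : {set {set sector n}}) (q0 p0 p1 : {set sector n}).
Hypotheses (HC1 : is_component sigma mate C1) (HC2 : is_component sigma mate C2).
Hypothesis C12 : C1 != C2.
Hypotheses (q0C1 : q0 \in C1) (p0C2 : p0 \in C2) (p1C2 : p1 \in C2).
Hypothesis p0_min : {in C2, forall p, L p0 <= L p}.
Hypothesis p1_max : {in C2, forall p, R p <= R p1}.
Hypothesis q0_first : L q0 < L p0.

Let sep q p : q \in C1 -> p \in C2 -> separated q p :=
  distinct_components_separated HC1 HC2 C12.

Lemma trace2_span v : v \in trace sigma C2 -> L p0 <= v <= R p1.
Proof.
case/bigcupP => p pC2 /(rsectors_bounds (component_ribbon HC2 pC2)).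
by have := p0_min pC2; have := p1_max pC2; lia.
Qed.

Lemma C1_not_inside_C2 q p : q \in C1 -> p \in C2 -> ~~ inside q p.
Proof.
move=> qC1 pC2; rewrite (component_const (f := inside^~ p) HC1 _ qC1 q0C1).
  by rewrite /inside; have := p0_min pC2; lia.
move=> x y xC1 yC1; apply: inside_cross; rewrite separated_sym; exact: sep.
Qed.

Lemma trace1_off_span u : u \in trace sigma C1 -> (u <= L p0) || (R p1 <= u).
Proof.
case/bigcupP => q qC1 uq; have sep_q := sep qC1.
have [q_thick _ /(_ u uq) near_ends] := shape (component_ribbon HC1 qC1).
have same_inside : inside p1 q = inside p0 q.
  apply: (component_const (f := inside^~ q) HC2) => // x y xC2 yC2.
  by apply: inside_cross; exact: sep_q.
have same_left : (R p1 <= L q) = (R p0 <= L q).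
  apply: (component_const (f := fun p => R p <= L q) HC2) => // x y xC2 yC2 xy.
  by rewrite (left_of_cross _ _ xy) ?sep_q ?C1_not_inside_C2.
case: (boolP (inside p0 q)) => [p0_in | p0_out].
  have p1_in : inside p1 q by rewrite same_inside.
  by move: p0_in p1_in; rewrite /inside; lia.
case: (boolP (R p0 <= L q)) => [p0_left | p0_right].
  have p1_left : R p1 <= L q by rewrite same_left.
  lia.
have := sep_q _ p0C2; have := C1_not_inside_C2 qC1 p0C2.
by move: p0_out p0_right; rewrite /separated /inside /cross; lia.
Qed.

Lemma subsequent_or_in_gap :
  (forall u v : sector n, u \in trace sigma C1 -> v \in trace sigma C2 -> u <= v) \/
  (exists c a, is_gap sigma C1 c a /\ trace sigma C2 \subset ginterval n c a).
Proof.
case: (boolP [exists u : sector n, (u \in trace sigma C1) && (R p1 <= u)]).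
  case/existsP => u0 /andP [u0I u0_right]; right.
  have [_ [w0 w0q w0_L] _] := shape (component_ribbon HC1 q0C1).
  have w0I : w0 \in trace sigma C1 by apply/bigcupP; exists q0.
  have [p0_thick _ _] := shape (component_ribbon HC2 p0C2).
  have span : (L p0).+1 < R p1 by have := p1_max p0C2; lia.
  have w0_left : w0 <= L p0 by rewrite w0_L ltnW.
  have [c [a [c_L R_a gap]]] :=
    is_gap_between span w0I w0_left u0I u0_right trace1_off_span.
  exists c, a; split => //; apply/subsetP => v /trace2_span v_span.
  by rewrite inE; lia.
move/existsPn => no_right; left => u v uI /trace2_span.
by have := trace1_off_span uI; have := no_right u; rewrite uI /=; lia.
Qed.

End Nesting.
End Components.

Theorem proposition3 (n : nat) (sigma : {perm (sector n)})
  (mate : sector n -> sector n) (tw : {set (sector n)} -> bool)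
  (C1 C2 : {set {set (sector n)}}) :
  unicellular_fatgraph sigma mate tw ->
  is_component sigma mate C1 -> is_component sigma mate C2 -> C1 != C2 ->
  (* subsequent *)
  (forall u v : sector n, u \in trace sigma C1 -> v \in trace sigma C2 -> u <= v) \/
  (forall u v : sector n, u \in trace sigma C1 -> v \in trace sigma C2 -> v <= u) \/
  (* nested *)
  (exists c a, is_gap sigma C2 c a /\ trace sigma C1 \subset ginterval n c a) \/
  (exists c a, is_gap sigma C1 c a /\ trace sigma C2 \subset ginterval n c a).
Proof.
move=> fatgraph HC1 HC2 C12.
have [shape ends] := (ribbon_shape fatgraph, ribbon_ends_inj fatgraph).
have [q0 [q1 [q0C1 q1C1 q0_min q1_max]]] := component_extremes HC1.
have [p0 [p1 [p0C2 p1C2 p0_min p1_max]]] := component_extremes HC2.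
have /and5P [_ _ neqL _ _] :=
  distinct_components_separated shape ends HC1 HC2 C12 q0C1 p0C2.
case: ltngtP neqL => // [q0_first | p0_first] _.
  have [sub | nested] :=
    subsequent_or_in_gap shape ends HC1 HC2 C12 q0C1 p0C2 p1C2 p0_min p1_max q0_first.
    by left.
  by right; right; right.
rewrite eq_sym in C12.
have [sub | nested] :=
  subsequent_or_in_gap shape ends HC2 HC1 C12 p0C2 q0C1 q1C1 q0_min q1_max p0_first.
  by right; left => u v uI vI; exact: sub.
by right; right; left.
Qed.
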